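(* For every tournament $R$ on $[n]=\{1,\dots,n\}$ there exist distinct $f_1,\dots,f_n\in\mathcal G_0$ such that for all distinct $i,j\in[n]$, $$\int_{-1}^1 f_j(f_i^{-1}(t))\,dt>0 \iff (i,j)\in R .$$ That is, every finite tournament embeds into the restriction of the digraph $\Gamma_{\mathcal G}$ to $\mathcal G_0$.
   Context: A tournament on a set $I$ is a subset $R\subset I\times I$ containing no pair $(i,i)$ such that for every pair of distinct $i,j\in I$ exactly one of $(i,j),(j,i)$ lies in $R$. Let $\mathcal G$ be the group (under composition) of strictly increasing continuous maps $f:[-1,1]\to[-1,1]$ with $f(-1)=-1$, $f(1)=1$, and $\mathcal G_0=\{f\in\mathcal G:\int_{-1}^1 f(t)\,dt=0\}$. The digraph $\Gamma_{\mathcal G}$ on $\mathcal G$ has an edge $f\to g$ iff $\int_{-1}^1 g(f^{-1}(t))\,dt>0$. *)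

From Stdlib Require Import Reals Lra ClassicalEpsilon.
From Coquelicot Require Import Coquelicot.
Open Scope R_scope.

Definition in_range (n i : nat) : Prop := (1 <= i <= n)%nat.

Definition is_tournament (n : nat) (T : nat -> nat -> Prop) : Prop :=
  (forall i j, T i j -> in_range n i /\ in_range n j) /\
  (forall i, ~ T i i) /\
  (forall i j, in_range n i -> in_range n j -> i <> j ->
     (T i j \/ T j i) /\ ~ (T i j /\ T j i)).

Definition cont_on_I (f : R -> R) : Prop :=
  forall x, -1 <= x <= 1 -> forall eps, 0 < eps -> exists delta, 0 < delta /\
    forall y, -1 <= y <= 1 -> Rabs (y - x) < delta -> Rabs (f y - f x) < eps.

(* Membership in the group G: strictly increasing continuous self-map of
   [-1,1] fixing -1 and 1 (only the values on [-1,1] matter). *)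
Definition inG (f : R -> R) : Prop :=
  (forall x y, -1 <= x -> x < y -> y <= 1 -> f x < f y) /\
  cont_on_I f /\ f (-1) = -1 /\ f 1 = 1.

Definition inG0 (f : R -> R) : Prop := inG f /\ RInt f (-1) 1 = 0.

Definition ginv (f : R -> R) (t : R) : R :=
  epsilon (inhabits 0) (fun x => -1 <= x <= 1 /\ f x = t).

Definition G_eq (f g : R -> R) : Prop := forall x, -1 <= x <= 1 -> f x = g x.

From Stdlib Require Import Reals.
From Coquelicot Require Import Coquelicot.
From Stdlib Require Import Lra Lia ClassicalEpsilon Ranalysis5.
Open Scope R_scope.

(* Each f_i is a small perturbation x + eps * phi_i x of the identity, where phi_i
   vanishes at -1 and 1 and has mean zero.  Substituting t = f_i x gives
   int f_j (f_i^-1 t) dt = int f_i' f_j = eps^2 * int phi_i' phi_j, because the terms of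
   order 0 and 1 vanish (int x phi_i' = - int phi_i = 0 by parts).  The form
   (phi, psi) |-> int phi' psi is antisymmetric on such functions, and on the
   trigonometric polynomials
     phi_i x = cos (2 pi i x) - cos (2 pi (n+1) x) + sum_k b_ik sin (2 pi k x)
   it equals 2 pi j b_ij - 2 pi i b_ji by orthogonality.  Taking b_ik = +-1 / (4 pi k)
   according to whether (i, k) is an edge makes it +-1 with the sign of the tournament;
   eps is chosen so small that every f_i stays increasing. *)

Lemma is_RInt_Rplus (f g : R -> R) a b If Ig :
  is_RInt f a b If -> is_RInt g a b Ig -> is_RInt (fun x => f x + g x) a b (If + Ig).
Proof. exact (is_RInt_plus f g a b If Ig). Qed.

Lemma is_RInt_Rminus (f g : R -> R) a b If Ig :
  is_RInt f a b If -> is_RInt g a b Ig -> is_RInt (fun x => f x - g x) a b (If - Ig).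
Proof. exact (is_RInt_minus f g a b If Ig). Qed.

Lemma is_RInt_Rmult_l (f : R -> R) a b c If :
  is_RInt f a b If -> is_RInt (fun x => c * f x) a b (c * If).
Proof. exact (is_RInt_scal f a b c If). Qed.

Lemma is_RInt_Rext (f g : R -> R) a b l :
  (forall x, f x = g x) -> is_RInt f a b l -> is_RInt g a b l.
Proof. intros Hfg. apply (is_RInt_ext f g a b l). intros x _. apply Hfg. Qed.

Lemma is_RInt_sum (g : nat -> R -> R) (I : nat -> R) N a b :
  (forall k, (k <= N)%nat -> is_RInt (g k) a b (I k)) ->
  is_RInt (fun x => sum_f_R0 (fun k => g k x) N) a b (sum_f_R0 I N).
Proof.
  induction N as [|N IH]; intros HI; simpl.
  - apply HI; lia.
  - apply (is_RInt_Rplus (fun x => sum_f_R0 (fun k => g k x) N) (g (S N))).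
    + apply IH; intros; apply HI; lia.
    + apply HI; lia.
Qed.

Lemma is_RInt_odd (f : R -> R) a :
  (forall x, f (- x) = - f x) -> (forall x, continuous f x) -> is_RInt f (- a) a 0.
Proof.
  intros Hodd Hcont.
  destruct (ex_RInt_continuous (V := R_CompleteNormedModule) f (- a) a) as [l Hl].
  { intros; apply Hcont. }
  assert (Hrev : is_RInt f a (- a) l).
  { assert (H := is_RInt_comp_opp f a (- a) l).
    rewrite Ropp_involutive in H.
    apply (is_RInt_ext (fun y => opp (f (- y))) f a (- a) l); [|exact (H Hl)].
    intros y _. change (- f (- y) = f y). rewrite Hodd. apply Ropp_involutive. }
  apply is_RInt_swap in Hrev.
  assert (Hl0 : l = 0).
  { pose proof (is_RInt_unique _ _ _ _ Hrev) as E.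
    rewrite (is_RInt_unique _ _ _ _ Hl) in E. change (opp l) with (- l) in E. lra. }
  rewrite <- Hl0; exact Hl.
Qed.

Lemma continuous_of_is_derive (f : R -> R) (df : R -> R) :
  (forall x, is_derive f x (df x)) -> forall x, continuous f x.
Proof.
  intros Hf x. apply (ex_derive_continuous (K := R_AbsRing) (V := R_NormedModule)).
  exists (df x). apply Hf.
Qed.

Lemma is_derive_sum (g dg : nat -> R -> R) N x :
  (forall k, is_derive (g k) x (dg k x)) ->
  is_derive (fun y => sum_f_R0 (fun k => g k y) N) x (sum_f_R0 (fun k => dg k x) N).
Proof.
  intros Hg. induction N as [|N IH]; simpl; [apply Hg |].
  exact (is_derive_plus (fun y => sum_f_R0 (fun k => g k y) N) (g (S N)) x _ _ IH (Hg (S N))).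
Qed.

Lemma sum_f_R0_opp (g : nat -> R) N : sum_f_R0 (fun k => - g k) N = - sum_f_R0 g N.
Proof. induction N as [|N IH]; simpl; [| rewrite IH]; ring. Qed.

Definition freq (k : nat) : R := 2 * PI * INR k.

Definition kron (a b : nat) : R := if Nat.eq_dec a b then 1 else 0.

Lemma kron_neq a b : a <> b -> kron a b = 0.
Proof. intros Hab. unfold kron. destruct (Nat.eq_dec a b); [contradiction | reflexivity]. Qed.

Lemma sum_kron (c : nat -> R) N j : (j <= N)%nat ->
  sum_f_R0 (fun k => c k * kron j k) N = c j.
Proof.
  induction N as [|N IH]; intros Hj; simpl.
  - replace j with 0%nat by lia. unfold kron; simpl. ring.
  - destruct (Nat.eq_dec j (S N)) as [-> | Hne].
    + rewrite sum_eq_R0 by (intros k Hk; rewrite kron_neq by lia; ring).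
      unfold kron. destruct (Nat.eq_dec (S N) (S N)); [ring | contradiction].
    + rewrite IH, kron_neq by lia. ring.
Qed.

Lemma sin_freq k : sin (freq k) = 0.
Proof.
  unfold freq. replace (2 * PI * INR k) with (0 + 2 * INR k * PI) by ring.
  rewrite sin_period. apply sin_0.
Qed.

Lemma cos_freq k : cos (freq k) = 1.
Proof.
  unfold freq. replace (2 * PI * INR k) with (0 + 2 * INR k * PI) by ring.
  rewrite cos_period. apply cos_0.
Qed.

Lemma trig_freq_pm1 k s : s = 1 \/ s = -1 -> cos (freq k * s) = 1 /\ sin (freq k * s) = 0.
Proof.
  intros [-> | ->].
  - rewrite Rmult_1_r, cos_freq, sin_freq. split; reflexivity.
  - replace (freq k * -1) with (- freq k) by ring.
    rewrite cos_neg, sin_neg, cos_freq, sin_freq. split; [reflexivity | ring].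
Qed.

Lemma Rabs_mult_sin_le c y : Rabs (c * sin y) <= Rabs c.
Proof.
  rewrite Rabs_mult. pose proof (SIN_bound y). pose proof (Rabs_pos c).
  assert (Rabs (sin y) <= 1) by (apply Rabs_le; lra). nra.
Qed.

Lemma Rabs_mult_cos_le c y : Rabs (c * cos y) <= Rabs c.
Proof.
  rewrite Rabs_mult. pose proof (COS_bound y). pose proof (Rabs_pos c).
  assert (Rabs (cos y) <= 1) by (apply Rabs_le; lra). nra.
Qed.

Lemma freq_add a b : freq (a + b) = freq a + freq b.
Proof. unfold freq. rewrite plus_INR. ring. Qed.

Lemma freq_ge_1 k : (0 < k)%nat -> 1 <= freq k.
Proof.
  intros Hk. unfold freq. pose proof PI2_1. apply (le_INR 1) in Hk. simpl in Hk. nra.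
Qed.

Lemma freq_nonneg k : 0 <= freq k.
Proof. unfold freq. pose proof PI_RGT_0. pose proof (pos_INR k). nra. Qed.

Lemma freq_sub_neq0 a b : a <> b -> freq a - freq b <> 0.
Proof.
  intros Hab E. apply Hab, INR_eq. unfold freq in E. pose proof PI_RGT_0. nra.
Qed.

Lemma freq_le a b : (a <= b)%nat -> freq a <= freq b.
Proof. intros H. unfold freq. apply le_INR in H. pose proof PI_RGT_0. nra. Qed.

Lemma is_RInt_cos_mul c : c <> 0 -> sin c = 0 -> is_RInt (fun x => cos (c * x)) (-1) 1 0.
Proof.
  intros Hc Hs.
  replace 0 with (minus (sin (c * 1) / c) (sin (c * -1) / c)).
  - apply (is_RInt_derive (V := R_CompleteNormedModule) (fun x => sin (c * x) / c)).
    + intros x _. auto_derive; [easy |]. field. exact Hc.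
    + intros x _. apply (continuous_of_is_derive _ (fun x => - c * sin (c * x))).
      intros y. auto_derive; [easy | ring].
  - change (sin (c * 1) / c - sin (c * -1) / c = 0).
    replace (c * -1) with (- c) by ring. rewrite Rmult_1_r, sin_neg, Hs. field. exact Hc.
Qed.

Lemma is_RInt_cos_freq_diff a b :
  is_RInt (fun x => cos ((freq a - freq b) * x)) (-1) 1 (2 * kron a b).
Proof.
  unfold kron. destruct (Nat.eq_dec a b) as [<- | Hab].
  - apply (is_RInt_Rext (fun _ => 1)).
    + intros x. rewrite Rminus_diag, Rmult_0_l, cos_0. reflexivity.
    + replace (2 * 1) with ((1 - -1) * 1) by ring.
      exact (is_RInt_const (V := R_NormedModule) (-1) 1 1).
  - rewrite Rmult_0_r. apply is_RInt_cos_mul.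
    + apply freq_sub_neq0, Hab.
    + rewrite sin_minus, !sin_freq. ring.
Qed.

Lemma is_RInt_cos_freq a : (0 < a)%nat -> is_RInt (fun x => cos (freq a * x)) (-1) 1 0.
Proof.
  intros Ha. apply is_RInt_cos_mul.
  - pose proof (freq_ge_1 a Ha). lra.
  - apply sin_freq.
Qed.

Lemma is_RInt_cos_cos a b : (0 < a + b)%nat ->
  is_RInt (fun x => cos (freq a * x) * cos (freq b * x)) (-1) 1 (kron a b).
Proof.
  intros Hab.
  apply (is_RInt_Rext (fun x => / 2 * cos ((freq a - freq b) * x) + / 2 * cos (freq (a + b) * x))).
  - intros x. rewrite freq_add.
    replace ((freq a - freq b) * x) with (freq a * x - freq b * x) by ring.
    replace ((freq a + freq b) * x) with (freq a * x + freq b * x) by ring.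
    rewrite cos_minus, cos_plus. field.
  - replace (kron a b) with (/ 2 * (2 * kron a b) + / 2 * 0) by field.
    apply is_RInt_Rplus; apply is_RInt_Rmult_l.
    + apply is_RInt_cos_freq_diff.
    + apply is_RInt_cos_freq, Hab.
Qed.

Lemma is_RInt_sin_sin a b : (0 < a + b)%nat ->
  is_RInt (fun x => sin (freq a * x) * sin (freq b * x)) (-1) 1 (kron a b).
Proof.
  intros Hab.
  apply (is_RInt_Rext (fun x => / 2 * cos ((freq a - freq b) * x) - / 2 * cos (freq (a + b) * x))).
  - intros x. rewrite freq_add.
    replace ((freq a - freq b) * x) with (freq a * x - freq b * x) by ring.
    replace ((freq a + freq b) * x) with (freq a * x + freq b * x) by ring.
    rewrite cos_minus, cos_plus. field.
  - replace (kron a b) with (/ 2 * (2 * kron a b) - / 2 * 0) by field.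
    apply is_RInt_Rminus; apply is_RInt_Rmult_l.
    + apply is_RInt_cos_freq_diff.
    + apply is_RInt_cos_freq, Hab.
Qed.

(* A global inverse: [ginv] only searches [-1, 1], but the change of variables
   needs the inverse to be continuous on a neighbourhood of [-1, 1]. *)
Definition finv (f : R -> R) (t : R) : R := epsilon (inhabits 0) (fun x => f x = t).

Section MonotoneInverse.

Variable f : R -> R.
Hypothesis f_incr : forall x y, x < y -> f x < f y.
Hypothesis f_surj : forall t, exists x, f x = t.
Hypothesis f_cont : forall x, continuity_pt f x.

Lemma f_finv t : f (finv f t) = t.
Proof. exact (epsilon_spec (inhabits 0) (fun x => f x = t) (f_surj t)). Qed.

Lemma incr_reflect_le x y : f x <= f y -> x <= y.
Proof. intros Hle. destruct (Rle_or_lt x y) as [H | H]; [exact H |]. apply f_incr in H. lra. Qed.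

Lemma finv_f x : finv f (f x) = x.
Proof. apply Rle_antisym; apply incr_reflect_le; rewrite f_finv; lra. Qed.

Lemma finv_continuous t : continuous (finv f) t.
Proof.
  apply continuity_pt_filterlim.
  set (x := finv f t).
  apply (continuity_pt_recip_interv f (finv f) (x - 1) (x + 1)); [lra | | | | |].
  - intros u v _ Huv _. apply f_incr, Huv.
  - intros u _ _. apply f_finv.
  - intros u Hl Hu. rewrite <- (f_finv u) in Hl, Hu. split; apply incr_reflect_le; assumption.
  - intros u _. apply f_cont.
  - rewrite <- (f_finv t). fold x. split; apply f_incr; lra.
Qed.

Lemma RInt_comp_finv (g df : R -> R) a b :
  (forall x, is_derive f x (df x)) -> (forall x, continuous df x) ->
  (forall x, continuous g x) ->
  RInt (fun t => g (finv f t)) (f a) (f b) = RInt (fun x => df x * g x) a b.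
Proof.
  intros Hder Hdc Hg.
  rewrite <- (RInt_comp (V := R_CompleteNormedModule) (fun t => g (finv f t)) f df a b).
  - apply RInt_ext. intros x _. rewrite finv_f. reflexivity.
  - intros x _. apply (continuous_comp (finv f) g). apply finv_continuous.
    rewrite finv_f. apply Hg.
  - intros x _. split; [apply Hder | apply Hdc].
Qed.

Lemma ginv_eq_finv t : f (-1) = -1 -> f 1 = 1 -> -1 <= t <= 1 ->
  ginv f t = finv f t /\ -1 <= finv f t <= 1.
Proof.
  intros Hm1 H1 Ht.
  assert (Hrange : -1 <= finv f t <= 1).
  { split; apply incr_reflect_le; rewrite f_finv; lra. }
  split; [| exact Hrange].
  unfold ginv.
  destruct (epsilon_spec (inhabits 0) (fun x => -1 <= x <= 1 /\ f x = t)) as [_ Hx].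
  - exists (finv f t). split; [exact Hrange | apply f_finv].
  - set (y := epsilon _ _) in *. rewrite <- Hx. symmetry. apply finv_f.
Qed.

End MonotoneInverse.

Lemma is_RInt_id : is_RInt (fun x => x) (-1) 1 0.
Proof.
  apply (is_RInt_odd (fun x => x) 1); [reflexivity |].
  intros x. apply (continuous_id (U := R_UniformSpace)).
Qed.

Definition perturb (eps : R) (phi : R -> R) (x : R) : R := x + eps * phi x.

Section Perturbation.

Variables (phi dphi : R -> R) (eps K M : R).
Hypothesis phi_der : forall x, is_derive phi x (dphi x).
Hypothesis dphi_cont : forall x, continuous dphi x.
Hypothesis dphi_bound : forall x, Rabs (dphi x) <= K.
Hypothesis phi_bound : forall x, Rabs (phi x) <= M.
Hypothesis eps_pos : 0 < eps.
Hypothesis eps_small : eps * K < 1.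
Hypothesis phi_m1 : phi (-1) = 0.
Hypothesis phi_1 : phi 1 = 0.
Hypothesis phi_int : is_RInt phi (-1) 1 0.

Local Notation f := (perturb eps phi).

Lemma perturb_der x : is_derive f x (1 + eps * dphi x).
Proof.
  unfold perturb. auto_derive.
  - exists (dphi x). apply phi_der.
  - change (Derive (fun y => phi y) x) with (Derive phi x).
    rewrite (is_derive_unique phi x (dphi x) (phi_der x)). ring.
Qed.

Lemma perturb_continuity_pt x : continuity_pt f x.
Proof.
  apply continuity_pt_filterlim, (continuous_of_is_derive f _ perturb_der).
Qed.

Lemma perturb_incr x y : x < y -> f x < f y.
Proof.
  intros Hxy.
  apply (incr_function f m_infty p_infty (fun x => 1 + eps * dphi x)); try easy.
  - intros z _ _. apply perturb_der.
  - intros z _ _. pose proof (dphi_bound z) as Hz. apply Rabs_le_between in Hz. nra.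
Qed.

Lemma perturb_surj t : exists x, f x = t.
Proof.
  assert (Hnear : forall x, Rabs (f x - x) <= eps * M).
  { intros x. unfold perturb. replace (x + eps * phi x - x) with (eps * phi x) by ring.
    rewrite Rabs_mult, (Rabs_pos_eq eps) by lra.
    apply Rmult_le_compat_l; [lra | apply phi_bound]. }
  assert (HM : 0 <= eps * M).
  { eapply Rle_trans; [apply Rabs_pos | apply (Hnear 0)]. }
  set (c := eps * M + 1).
  destruct (IVT (fun x => f x - t) (t - c) (t + c)) as [z [_ Hz]].
  - intros x. apply continuity_pt_minus;
      [apply perturb_continuity_pt | apply continuity_pt_const; intros ? ?; reflexivity].
  - unfold c; lra.
  - pose proof (Hnear (t - c)) as H. apply Rabs_le_between in H. unfold c in *. lra.
  - pose proof (Hnear (t + c)) as H. apply Rabs_le_between in H. unfold c in *. lra.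
  - exists z. lra.
Qed.

Lemma perturb_m1 : f (-1) = -1.
Proof. unfold perturb. rewrite phi_m1. ring. Qed.

Lemma perturb_1 : f 1 = 1.
Proof. unfold perturb. rewrite phi_1. ring. Qed.

Lemma perturb_cont_on_I : cont_on_I f.
Proof.
  intros x _ e He.
  destruct (perturb_continuity_pt x e He) as [d [Hd Hclose]].
  exists d. split; [exact Hd |]. intros y _ Hyx.
  destruct (Req_dec y x) as [-> | Hne].
  - rewrite Rminus_diag, Rabs_R0. exact He.
  - apply (Hclose y). split; [split; [exact I | auto] | exact Hyx].
Qed.

Lemma perturb_inG0 : inG0 f.
Proof.
  split; [split; [| split; [| split]] |].
  - intros x y _ Hxy _. apply perturb_incr, Hxy.
  - apply perturb_cont_on_I.
  - apply perturb_m1.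
  - apply perturb_1.
  - apply is_RInt_unique. unfold perturb.
    replace 0 with (0 + eps * 0) by ring.
    apply is_RInt_Rplus; [apply is_RInt_id | apply is_RInt_Rmult_l, phi_int].
Qed.

Lemma RInt_G_eq_ginv (g : R -> R) : G_eq g f -> RInt (fun t => g (ginv f t)) (-1) 1 = 0.
Proof.
  intros Hgf. rewrite (RInt_ext _ (fun t => t)); [apply is_RInt_unique, is_RInt_id |].
  intros t Ht. rewrite Rmin_left, Rmax_right in Ht by lra.
  destruct (ginv_eq_finv f perturb_incr perturb_surj t perturb_m1 perturb_1 ltac:(lra))
    as [-> Hr].
  rewrite Hgf by exact Hr. apply f_finv, perturb_surj.
Qed.

Lemma is_RInt_id_mul_dphi : is_RInt (fun x => x * dphi x) (-1) 1 0.
Proof.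
  assert (Hparts : is_RInt (fun x => phi x + x * dphi x) (-1) 1 0).
  { replace 0 with (minus (1 * phi 1) (-1 * phi (-1))) by
      (change (1 * phi 1 - -1 * phi (-1) = 0); rewrite phi_m1, phi_1; ring).
    apply (is_RInt_derive (V := R_CompleteNormedModule) (fun x => x * phi x)).
    - intros x _. auto_derive.
      + exists (dphi x). apply phi_der.
      + change (Derive (fun y => phi y) x) with (Derive phi x).
        rewrite (is_derive_unique phi x (dphi x) (phi_der x)). ring.
    - intros x _. apply (continuous_plus phi (fun x => x * dphi x)).
      + apply (continuous_of_is_derive phi dphi phi_der).
      + apply (continuous_mult (fun x => x) dphi); [apply continuous_id | apply dphi_cont]. }
  apply (is_RInt_Rext (fun x => (phi x + x * dphi x) - phi x)); [intros x; ring |].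
  replace 0 with (0 - 0) by ring. apply is_RInt_Rminus; [exact Hparts | exact phi_int].
Qed.

Lemma RInt_perturb_ginv (psi : R -> R) (B : R) :
  (forall x, continuous psi x) -> is_RInt psi (-1) 1 0 ->
  is_RInt (fun x => dphi x * psi x) (-1) 1 B ->
  RInt (fun t => perturb eps psi (ginv f t)) (-1) 1 = eps ^ 2 * B.
Proof.
  intros Hpsi_cont Hpsi_int HB.
  rewrite (RInt_ext _ (fun t => perturb eps psi (finv f t))).
  2:{ intros t Ht. rewrite Rmin_left, Rmax_right in Ht by lra.
      rewrite (proj1 (ginv_eq_finv f perturb_incr perturb_surj t perturb_m1 perturb_1 ltac:(lra))).
      reflexivity. }
  rewrite <- perturb_m1, <- perturb_1.
  rewrite (RInt_comp_finv f perturb_incr perturb_surj perturb_continuity_pt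
             (perturb eps psi) (fun x => 1 + eps * dphi x)).
  - apply is_RInt_unique. unfold perturb.
    apply (is_RInt_Rext (fun x => (x + eps * psi x + eps * (x * dphi x)) + eps ^ 2 * (dphi x * psi x)));
      [intros x; ring |].
    replace (eps ^ 2 * B) with ((0 + eps * 0 + eps * 0) + eps ^ 2 * B) by ring.
    apply is_RInt_Rplus; [apply is_RInt_Rplus; [apply is_RInt_Rplus |] |].
    + apply is_RInt_id.
    + apply is_RInt_Rmult_l, Hpsi_int.
    + apply is_RInt_Rmult_l, is_RInt_id_mul_dphi.
    + apply is_RInt_Rmult_l, HB.
  - apply perturb_der.
  - intros x. apply (continuous_plus (fun _ => 1) (fun x => eps * dphi x)).
    + apply continuous_const.
    + apply (continuous_scal_r eps dphi), dphi_cont.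
  - intros x. apply (continuous_plus (fun x => x) (fun x => eps * psi x)).
    + apply continuous_id.
    + apply (continuous_scal_r eps psi), Hpsi_cont.
Qed.

End Perturbation.

Section Modes.

Variable n : nat.
Variable b : nat -> nat -> R.

(* Subtracting [cos (freq (S n) x)] makes [mode i] vanish at -1 and 1; the frequency
   [S n] exceeds every index, so it does not contribute to the pairings below. *)
Definition cos_part i x := cos (freq i * x) - cos (freq (S n) * x).
Definition sin_part i x := sum_f_R0 (fun k => b i k * sin (freq k * x)) n.
Definition mode i x := cos_part i x + sin_part i x.

Definition dcos_part i x := - freq i * sin (freq i * x) + freq (S n) * sin (freq (S n) * x).
Definition dsin_part i x := sum_f_R0 (fun k => b i k * freq k * cos (freq k * x)) n.
Definition dmode i x := dcos_part i x + dsin_part i x.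

Lemma is_derive_cos_part i x : is_derive (cos_part i) x (dcos_part i x).
Proof. unfold cos_part, dcos_part. auto_derive; [easy | ring]. Qed.

Lemma is_derive_sin_part i x : is_derive (sin_part i) x (dsin_part i x).
Proof.
  apply (is_derive_sum (fun k y => b i k * sin (freq k * y))
           (fun k y => b i k * freq k * cos (freq k * y))).
  intros k. auto_derive; [easy | ring].
Qed.

Lemma is_derive_mode i x : is_derive (mode i) x (dmode i x).
Proof.
  exact (is_derive_plus (cos_part i) (sin_part i) x _ _
           (is_derive_cos_part i x) (is_derive_sin_part i x)).
Qed.

Lemma continuous_dcos_part i x : continuous (dcos_part i) x.
Proof.
  apply (continuous_of_is_derive _ (fun y => - freq i * (freq i * cos (freq i * y))
           + freq (S n) * (freq (S n) * cos (freq (S n) * y)))).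
  intros y. unfold dcos_part. auto_derive; [easy | ring].
Qed.

Lemma continuous_dsin_part i x : continuous (dsin_part i) x.
Proof.
  apply (continuous_of_is_derive _
           (fun y => sum_f_R0 (fun k => - (b i k * freq k * freq k) * sin (freq k * y)) n)).
  intros y. apply (is_derive_sum (fun k y => b i k * freq k * cos (freq k * y))
                     (fun k y => - (b i k * freq k * freq k) * sin (freq k * y)) n y).
  intros k. auto_derive; [easy | ring].
Qed.

Lemma continuous_dmode i x : continuous (dmode i) x.
Proof.
  exact (continuous_plus (dcos_part i) (dsin_part i) x
           (continuous_dcos_part i x) (continuous_dsin_part i x)).
Qed.

Lemma mode_pm1 i s : s = 1 \/ s = -1 -> mode i s = 0.
Proof.
  intros Hs. unfold mode, cos_part, sin_part.
  rewrite !(proj1 (trig_freq_pm1 _ s Hs)), sum_eq_R0; [ring |].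
  intros k _. rewrite (proj2 (trig_freq_pm1 k s Hs)). ring.
Qed.

Lemma cos_part_even i x : cos_part i (- x) = cos_part i x.
Proof. unfold cos_part. rewrite <- !Ropp_mult_distr_r, !cos_neg. reflexivity. Qed.

Lemma dcos_part_odd i x : dcos_part i (- x) = - dcos_part i x.
Proof. unfold dcos_part. rewrite <- !Ropp_mult_distr_r, !sin_neg. ring. Qed.

Lemma sin_part_odd i x : sin_part i (- x) = - sin_part i x.
Proof.
  unfold sin_part. rewrite <- sum_f_R0_opp. apply sum_eq. intros k _.
  rewrite <- Ropp_mult_distr_r, sin_neg. ring.
Qed.

Lemma dsin_part_even i x : dsin_part i (- x) = dsin_part i x.
Proof.
  unfold dsin_part. apply sum_eq. intros k _. rewrite <- Ropp_mult_distr_r, cos_neg. reflexivity.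
Qed.

Lemma is_RInt_mode i : (0 < i)%nat -> is_RInt (mode i) (-1) 1 0.
Proof.
  intros Hi. replace 0 with ((0 - 0) + 0) by ring.
  apply (is_RInt_Rplus (cos_part i) (sin_part i)).
  - apply is_RInt_Rminus; apply is_RInt_cos_freq; lia.
  - apply (is_RInt_odd (sin_part i) 1); [apply sin_part_odd |].
    apply (continuous_of_is_derive _ _ (is_derive_sin_part i)).
Qed.

Lemma is_RInt_dcos_cos_part i j : is_RInt (fun x => dcos_part i x * cos_part j x) (-1) 1 0.
Proof.
  apply (is_RInt_odd (fun x => dcos_part i x * cos_part j x) 1).
  - intros x. rewrite dcos_part_odd, cos_part_even. ring.
  - intros x. apply (continuous_mult (dcos_part i) (cos_part j)).
    + apply continuous_dcos_part.
    + apply (continuous_of_is_derive _ _ (is_derive_cos_part j)).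
Qed.

Lemma is_RInt_dsin_sin_part i j : is_RInt (fun x => dsin_part i x * sin_part j x) (-1) 1 0.
Proof.
  apply (is_RInt_odd (fun x => dsin_part i x * sin_part j x) 1).
  - intros x. rewrite dsin_part_even, sin_part_odd. ring.
  - intros x. apply (continuous_mult (dsin_part i) (sin_part j)).
    + apply continuous_dsin_part.
    + apply (continuous_of_is_derive _ _ (is_derive_sin_part j)).
Qed.

Lemma is_RInt_dcos_sin_part i j : (0 < i <= n)%nat ->
  is_RInt (fun x => dcos_part i x * sin_part j x) (-1) 1 (- freq i * b j i).
Proof.
  intros Hi.
  apply (is_RInt_Rext (fun x => sum_f_R0 (fun k => b j k * (dcos_part i x * sin (freq k * x))) n)).
  { intros x. unfold sin_part. rewrite scal_sum. apply sum_eq. intros k _. ring. }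
  replace (- freq i * b j i) with (sum_f_R0 (fun k => b j k * - freq i * kron i k) n)
    by (rewrite sum_kron by lia; ring).
  apply (is_RInt_sum (fun k x => b j k * (dcos_part i x * sin (freq k * x)))
                     (fun k => b j k * - freq i * kron i k)).
  intros k Hk.
  replace (b j k * - freq i * kron i k)
    with (b j k * (- freq i * kron i k + freq (S n) * kron (S n) k))
    by (rewrite (kron_neq (S n) k) by lia; ring).
  apply is_RInt_Rmult_l. unfold dcos_part.
  apply (is_RInt_Rext (fun x => - freq i * (sin (freq i * x) * sin (freq k * x))
                               + freq (S n) * (sin (freq (S n) * x) * sin (freq k * x))));
    [intros x; ring |].
  apply is_RInt_Rplus; apply is_RInt_Rmult_l; apply is_RInt_sin_sin; lia.
Qed.

Lemma is_RInt_dsin_cos_part i j : (0 < j <= n)%nat ->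
  is_RInt (fun x => dsin_part i x * cos_part j x) (-1) 1 (freq j * b i j).
Proof.
  intros Hj.
  apply (is_RInt_Rext (fun x => sum_f_R0 (fun k => b i k * freq k * (cos_part j x * cos (freq k * x))) n)).
  { intros x. unfold dsin_part. rewrite Rmult_comm, scal_sum. apply sum_eq. intros k _. ring. }
  replace (freq j * b i j) with (sum_f_R0 (fun k => b i k * freq k * kron j k) n)
    by (rewrite sum_kron by lia; ring).
  apply (is_RInt_sum (fun k x => b i k * freq k * (cos_part j x * cos (freq k * x)))
                     (fun k => b i k * freq k * kron j k)).
  intros k Hk.
  replace (b i k * freq k * kron j k) with (b i k * freq k * (kron j k - kron (S n) k))
    by (rewrite (kron_neq (S n) k) by lia; ring).
  apply is_RInt_Rmult_l. unfold cos_part.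
  apply (is_RInt_Rext (fun x => cos (freq j * x) * cos (freq k * x)
                               - cos (freq (S n) * x) * cos (freq k * x)));
    [intros x; ring |].
  apply is_RInt_Rminus; apply is_RInt_cos_cos; lia.
Qed.

Lemma is_RInt_dmode_mode i j : (0 < i <= n)%nat -> (0 < j <= n)%nat ->
  is_RInt (fun x => dmode i x * mode j x) (-1) 1 (freq j * b i j - freq i * b j i).
Proof.
  intros Hi Hj.
  apply (is_RInt_Rext (fun x => (dcos_part i x * cos_part j x + dsin_part i x * sin_part j x)
                               + (dcos_part i x * sin_part j x + dsin_part i x * cos_part j x))).
  { intros x. unfold dmode, mode. ring. }
  replace (freq j * b i j - freq i * b j i)
    with ((0 + 0) + (- freq i * b j i + freq j * b i j)) by ring.
  apply is_RInt_Rplus; apply is_RInt_Rplus.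
  - apply is_RInt_dcos_cos_part.
  - apply is_RInt_dsin_sin_part.
  - apply is_RInt_dcos_sin_part, Hi.
  - apply is_RInt_dsin_cos_part, Hj.
Qed.

Lemma Rabs_sum_le_const (g : nat -> R) N : (forall k, Rabs (g k) <= 1) ->
  Rabs (sum_f_R0 g N) <= INR (S N).
Proof.
  intros Hg. eapply Rle_trans; [apply Rsum_abs |].
  rewrite <- (Rmult_1_l (INR (S N))), <- sum_cte. apply sum_Rle. intros k _. apply Hg.
Qed.

Lemma dmode_bound i x : (i <= n)%nat -> (forall k, Rabs (b i k) * freq k <= 1) ->
  Rabs (dmode i x) <= 2 * freq (S n) + INR (S n).
Proof.
  intros Hi Hb. unfold dmode, dcos_part, dsin_part.
  eapply Rle_trans; [apply Rabs_triang | apply Rplus_le_compat].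
  - eapply Rle_trans; [apply Rabs_triang |].
    pose proof (Rabs_mult_sin_le (- freq i) (freq i * x)) as Hfi.
    pose proof (Rabs_mult_sin_le (freq (S n)) (freq (S n) * x)) as Hfn.
    rewrite Rabs_Ropp, (Rabs_pos_eq (freq i)) in Hfi by apply freq_nonneg.
    rewrite (Rabs_pos_eq (freq (S n))) in Hfn by apply freq_nonneg.
    pose proof (freq_le i (S n) ltac:(lia)). lra.
  - apply Rabs_sum_le_const. intros k.
    eapply Rle_trans; [apply Rabs_mult_cos_le |].
    rewrite Rabs_mult, (Rabs_pos_eq (freq k)) by apply freq_nonneg. apply Hb.
Qed.

Lemma mode_bound i x : (forall k, Rabs (b i k) <= 1) -> Rabs (mode i x) <= 2 + INR (S n).
Proof.
  intros Hb. unfold mode, cos_part, sin_part.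
  eapply Rle_trans; [apply Rabs_triang | apply Rplus_le_compat].
  - eapply Rle_trans; [apply Rabs_triang |]. rewrite Rabs_Ropp.
    pose proof (Rabs_mult_cos_le 1 (freq i * x)).
    pose proof (Rabs_mult_cos_le 1 (freq (S n) * x)).
    rewrite Rmult_1_l, Rabs_R1 in *. lra.
  - apply Rabs_sum_le_const. intros k.
    eapply Rle_trans; [apply Rabs_mult_sin_le | apply Hb].
Qed.

End Modes.

Definition tsign (T : nat -> nat -> Prop) (i k : nat) : R :=
  if excluded_middle_informative (T i k) then 1 else -1.

(* At [k = 0] this is [s / 0 = 0]; that coefficient only multiplies [sin 0]. *)
Definition tcoef (T : nat -> nat -> Prop) (i k : nat) : R := tsign T i k / (2 * freq k).

Definition eps (n : nat) : R := / (2 * (2 * freq (S n) + INR (S n))).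

Definition embedding (n : nat) (T : nat -> nat -> Prop) (i : nat) : R -> R :=
  perturb (eps n) (mode n (tcoef T) i).

Lemma Rabs_tsign T i k : Rabs (tsign T i k) = 1.
Proof.
  unfold tsign, Rabs. destruct excluded_middle_informative; destruct Rcase_abs; lra.
Qed.

Lemma freq_mul_tcoef T i k : (0 < k)%nat -> freq k * tcoef T i k = tsign T i k / 2.
Proof.
  intros Hk. pose proof (freq_ge_1 k Hk).
  unfold tcoef. field. lra.
Qed.

Lemma tcoef_bound T i k : Rabs (tcoef T i k) * freq k <= 1 /\ Rabs (tcoef T i k) <= 1.
Proof.
  destruct k as [| k].
  - unfold tcoef, freq. simpl INR. rewrite !Rmult_0_r, Rdiv_0_r, Rabs_R0. lra.
  - pose proof (freq_ge_1 (S k) ltac:(lia)).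
    assert (Hdiv : Rabs (tcoef T i (S k)) = / (2 * freq (S k))).
    { unfold tcoef, Rdiv. rewrite Rabs_mult, Rabs_tsign, Rabs_inv, Rabs_pos_eq by lra. ring. }
    rewrite Hdiv. split.
    + replace (/ (2 * freq (S k)) * freq (S k)) with (/ 2) by (field; lra). lra.
    + rewrite <- Rinv_1. apply Rinv_le_contravar; lra.
Qed.

Lemma eps_pos n : 0 < eps n.
Proof.
  unfold eps. pose proof (freq_nonneg (S n)). pose proof (lt_0_INR (S n) (Nat.lt_0_succ n)).
  apply Rinv_0_lt_compat. lra.
Qed.

Lemma eps_small n : eps n * (2 * freq (S n) + INR (S n)) < 1.
Proof.
  unfold eps. pose proof (freq_nonneg (S n)). pose proof (lt_0_INR (S n) (Nat.lt_0_succ n)).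
  rewrite Rinv_mult, Rmult_assoc, Rinv_l by lra. lra.
Qed.

Lemma tsign_pairing n T i j : is_tournament n T -> in_range n i -> in_range n j -> i <> j ->
  (T i j /\ (tsign T i j - tsign T j i) / 2 = 1) \/
  (~ T i j /\ (tsign T i j - tsign T j i) / 2 = -1).
Proof.
  intros [_ [_ Htour]] Hi Hj Hij. unfold tsign.
  destruct (Htour i j Hi Hj Hij) as [Hcover Hexcl].
  destruct (excluded_middle_informative (T i j)) as [Hij' | Hij'],
           (excluded_middle_informative (T j i)) as [Hji | Hji].
  - exfalso. apply Hexcl. split; assumption.
  - left. split; [assumption | lra].
  - right. split; [assumption | lra].
  - exfalso. destruct Hcover; contradiction.
Qed.

Section Embedding.

Variables (n : nat) (T : nat -> nat -> Prop) (i : nat).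
Hypothesis i_range : (0 < i <= n)%nat.

Local Notation phi := (mode n (tcoef T) i).
Local Notation dphi := (dmode n (tcoef T) i).

Lemma dmode_tcoef_bound x : Rabs (dphi x) <= 2 * freq (S n) + INR (S n).
Proof. apply dmode_bound; [lia |]. intros k. apply tcoef_bound. Qed.

Lemma mode_tcoef_bound x : Rabs (phi x) <= 2 + INR (S n).
Proof. apply mode_bound. intros k. apply tcoef_bound. Qed.

Let mode_m1 : phi (-1) = 0 := mode_pm1 n (tcoef T) i (-1) (or_intror eq_refl).
Let mode_1 : phi 1 = 0 := mode_pm1 n (tcoef T) i 1 (or_introl eq_refl).
Let mode_int : is_RInt phi (-1) 1 0 := is_RInt_mode n (tcoef T) i (proj1 i_range).

Lemma embedding_inG0 : inG0 (embedding n T i).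
Proof.
  exact (perturb_inG0 phi dphi (eps n) _ (is_derive_mode n _ i) dmode_tcoef_bound
           (eps_pos n) (eps_small n) mode_m1 mode_1 mode_int).
Qed.

Lemma RInt_G_eq_embedding (g : R -> R) : G_eq g (embedding n T i) ->
  RInt (fun t => g (ginv (embedding n T i) t)) (-1) 1 = 0.
Proof.
  exact (RInt_G_eq_ginv phi dphi (eps n) _ _ (is_derive_mode n _ i) dmode_tcoef_bound
           mode_tcoef_bound (eps_pos n) (eps_small n) mode_m1 mode_1 g).
Qed.

Lemma RInt_embedding j : (0 < j <= n)%nat ->
  RInt (fun t => embedding n T j (ginv (embedding n T i) t)) (-1) 1
  = eps n ^ 2 * ((tsign T i j - tsign T j i) / 2).
Proof.
  intros Hj.
  apply (RInt_perturb_ginv phi dphi (eps n) _ _ (is_derive_mode n _ i) (continuous_dmode n _ i)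
           dmode_tcoef_bound mode_tcoef_bound (eps_pos n) (eps_small n) mode_m1 mode_1 mode_int).
  - apply (continuous_of_is_derive _ _ (is_derive_mode n _ j)).
  - apply is_RInt_mode. lia.
  - replace ((tsign T i j - tsign T j i) / 2)
      with (freq j * tcoef T i j - freq i * tcoef T j i)
      by (rewrite !freq_mul_tcoef by lia; field).
    apply is_RInt_dmode_mode; lia.
Qed.

End Embedding.

Theorem theorem2p1 (n : nat) (T : nat -> nat -> Prop) :
  is_tournament n T ->
  exists f : nat -> R -> R,
    (forall i, in_range n i -> inG0 (f i)) /\
    (forall i j, in_range n i -> in_range n j -> i <> j -> ~ G_eq (f i) (f j)) /\
    (forall i j, in_range n i -> in_range n j -> i <> j ->
       (RInt (fun t => f j (ginv (f i) t)) (-1) 1 > 0 <-> T i j)).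
Proof.
  intros Htour. exists (embedding n T).
  pose proof (eps_pos n) as Heps.
  split; [| split].
  - intros i Hi. exact (embedding_inG0 n T i Hi).
  - intros i j Hi Hj Hij Heq.
    assert (Hsym : G_eq (embedding n T j) (embedding n T i))
      by (intros x Hx; symmetry; apply Heq, Hx).
    pose proof (RInt_G_eq_embedding n T i Hi _ Hsym) as Hzero.
    rewrite (RInt_embedding n T i Hi j Hj) in Hzero.
    destruct (tsign_pairing n T i j Htour Hi Hj Hij) as [[_ E] | [_ E]];
      rewrite E in Hzero; nra.
  - intros i j Hi Hj Hij. rewrite (RInt_embedding n T i Hi j Hj).
    destruct (tsign_pairing n T i j Htour Hi Hj Hij) as [[HT ->] | [HT ->]];
      split; intros; (assumption || nra || contradiction).
Qed.
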